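(* Let $\lambda$ be a partition of $r$ and let $M$ be a $\mathbf{Z}S_r$-module that is free as a $\mathbf{Z}$-module. If $f:S^\lambda\to M$ is a non-zero homomorphism of $\mathbf{Z}S_r$-modules, then $f$ is injective.
   Context: $S^\lambda$ denotes the integral Specht module for $\mathbf{Z}S_r$ (the $\mathbf{Z}$-span of the $\lambda$-polytabloids in the Young permutation module $M^\lambda$). *)

From HB Require Import structures.
From mathcomp Require Import all_boot all_order all_algebra all_fingroup.
Set Implicit Arguments. Unset Strict Implicit. Unset Printing Implicit Defensive.
Import GRing.Theory.
Local Open Scope ring_scope.

Definition is_partition (lam : seq nat) (r : nat) : bool :=
  [&& sorted geq lam, all (fun x => 0 < x)%N lam & sumn lam == r].

(* Cells of the Young diagram of lam are numbered 0..r-1 in row-reading order;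
   row_of / col_of give the row / column of cell k. *)
Definition row_of (lam : seq nat) (k : nat) : nat :=
  count (fun i => sumn (take i.+1 lam) <= k)%N (iota 0 (size lam)).
Definition col_of (lam : seq nat) (k : nat) : nat :=
  (k - sumn (take (row_of lam k) lam))%N.

(* A lam-tableau is t : 'S_r, cell k carrying entry t k.  S_r acts on the right
   on tableaux by t.s = t * s (entry i replaced by s i; (t * s) k = s (t k)). *)

(* Row functions: entry i |-> row index (rows < size lam <= r). *)
Notation rowfun r := {ffun 'I_r -> 'I_r.+1}.

(* The tabloid {t}, encoded as the function sending each entry to its row. *)
Definition tabloid (lam : seq nat) (r : nat) (t : 'S_r) : rowfun r :=
  [ffun i => inord (row_of lam ((t^-1)%g i))].

(* The permutation module: formal Z-combinations of row functions (it contains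
   the Young permutation module M^lam as the span of the tabloids). *)
Notation Mperm r := {ffun rowfun r -> int}.

Definition delta (r : nat) (phi : rowfun r) : Mperm r :=
  [ffun psi => ((psi == phi) : nat)%:Z].

(* Right action of S_r on Mperm: (v.s)(psi) = v(psi.s^-1), so delta phi . s = delta (phi.s)
   where (phi.s)(i) = phi (s^-1 i). *)
Definition mperm_act (r : nat) (s : 'S_r) (v : Mperm r) : Mperm r :=
  [ffun psi : rowfun r => v [ffun i => psi (s i)]].

Definition colgroup (lam : seq nat) (r : nat) (t : 'S_r) : pred 'S_r :=
  fun p => [forall i, col_of lam ((t^-1)%g (p i)) == col_of lam ((t^-1)%g i)].

Definition polytabloid (lam : seq nat) (r : nat) (t : 'S_r) : Mperm r :=
  \sum_(p : 'S_r | colgroup lam t p) delta (tabloid lam (t * p)%g) *~ ((-1) ^+ odd_perm p).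

Definition specht (lam : seq nat) (r : nat) (v : Mperm r) : Prop :=
  exists c : {ffun 'S_r -> int}, v = \sum_(t : 'S_r) polytabloid lam t *~ c t.

Definition is_ZSr_action (r : nat) (M : zmodType) (act : 'S_r -> M -> M) : Prop :=
  [/\ forall g x y, act g (x + y) = act g x + act g y,
      forall x, act 1%g x = x &
      forall g h x, act (g * h)%g x = act h (act g x)].

Definition free_Zmodule (M : zmodType) : Prop :=
  exists (I : eqType) (b : I -> M),
    (forall (s : seq I) (c : I -> int), uniq s ->
        \sum_(i <- s) b i *~ c i = 0 -> forall i, i \in s -> c i = 0)
    /\ (forall m : M, exists (s : seq I) (c : I -> int), m = \sum_(i <- s) b i *~ c i).

From mathcomp Require Import all_boot all_order all_algebra all_fingroup.
Import GRing.Theory.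
Set Implicit Arguments. Unset Strict Implicit. Unset Printing Implicit Defensive.

(** Let [kappa_t] be the signed column
    sum of the tableau [t] and [<,>] the standard form on the permutation module.
    The basic combinatorial lemma gives [kappa_t {u} = <{u}, e_t> e_t] for every
    tabloid [{u}], hence [kappa_t x = <x, e_t> e_t] on [S^lam].  If [f z = 0]
    with [z <> 0] in [S^lam], then [<z, z> <> 0] yields a [t] with
    [<z, e_t> <> 0], and [0 = kappa_t (f z) = f (kappa_t z) = <z, e_t> f e_t];
    as [M] is torsion-free, [f e_t = 0], and since [e_t] generates [S^lam] as a
    module, [f = 0]. *)

Lemma size_le_sumn (s : seq nat) : all (fun x => 0 < x) s -> size s <= sumn s.
Proof. by elim: s => //= a s IH /andP[a0 /IH]; rewrite -add1n; apply: leq_add. Qed.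

Lemma downclosed_count_iota (P : pred nat) n :
  (forall i j, i <= j -> P j -> P i) ->
  forall i, i < n -> P i = (i < count P (iota 0 n)).
Proof.
move=> Pdown; elim: n => [//|n IH] i.
rewrite -[n.+1]addn1 iotaD count_cat /= addn0 add0n.
have cn : count P (iota 0 n) <= n by rewrite -{2}(size_iota 0 n) count_size.
case Pn: (P n).
  have -> : count P (iota 0 n) = n.
    have : all P (iota 0 n).
      apply/allP => j; rewrite mem_iota add0n /= => jn.
      by apply: (Pdown j n) => //; exact: ltnW.
    by rewrite all_count size_iota => /eqP.
  by rewrite addn1 ltnS => iln; rewrite iln; exact: (Pdown i n).
rewrite addn1 ltnS /= addn0 leq_eqVlt => /orP[/eqP->|iln]; first by rewrite ltnNge cn.
exact: IH.
Qed.

Section Shape.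
Variable lam : seq nat.

Definition row_start i := sumn (take i lam).

Lemma row_start_mono : {homo row_start : i j / i <= j}.
Proof.
have row_startS i : row_start i <= row_start i.+1.
  rewrite /row_start; case: (ltnP i (size lam)) => H.
    by rewrite (take_nth 0 H) sumn_rcons leq_addr.
  by rewrite !take_oversize // (leq_trans H).
move=> i j; elim: j => [|j IH]; first by rewrite leqn0 => /eqP->.
rewrite leq_eqVlt => /orP[/eqP->//|/IH ij].
exact: leq_trans ij (row_startS j).
Qed.

Lemma row_start_le_sumn i : row_start i <= sumn lam.
Proof.
have -> : sumn lam = row_start (i + size lam).
  by rewrite /row_start take_oversize // leq_addl.
by apply: row_start_mono; rewrite leq_addr.
Qed.

Let before k := fun i => row_start i.+1 <= k.

Let before_down k i j : i <= j -> before k j -> before k i.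
Proof. by move=> ij; apply: leq_trans; apply: row_start_mono. Qed.

Let row_ofE k : row_of lam k = count (before k) (iota 0 (size lam)).
Proof. by []. Qed.

Lemma row_of_le_size k : row_of lam k <= size lam.
Proof. by rewrite row_ofE -{2}(size_iota 0 (size lam)) count_size. Qed.

Lemma row_start_row_of k : row_start (row_of lam k) <= k.
Proof.
have := row_of_le_size k; case E: (row_of lam k) => [|m] ms.
  by rewrite /row_start take0.
have := @downclosed_count_iota (before k) (size lam) (@before_down k) m ms.
by rewrite -row_ofE E ltnSn.
Qed.

Lemma lt_row_start_row_of k : k < sumn lam -> k < row_start (row_of lam k).+1.
Proof.
move=> ks; have := row_of_le_size k; rewrite leq_eqVlt => /orP[/eqP E|ms].
  by rewrite E /row_start take_oversize.
have := @downclosed_count_iota (before k) (size lam) (@before_down k) _ ms.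
by rewrite -row_ofE ltnn /before => /negbT; rewrite -ltnNge.
Qed.

Lemma row_of_eq k i : row_start i <= k < row_start i.+1 -> row_of lam k = i.
Proof.
move=> /andP[ik ki].
have ks : k < sumn lam by apply: leq_trans ki (row_start_le_sumn _).
case: (ltngtP (row_of lam k) i) => // H.
  by have := leq_trans (row_start_mono H) ik; rewrite leqNgt lt_row_start_row_of.
have isz : i < size lam by apply: leq_trans H (row_of_le_size k).
have := @downclosed_count_iota (before k) (size lam) (@before_down k) _ isz.
by rewrite -row_ofE H /before leqNgt ki.
Qed.

Lemma cell_inj k k' :
  row_of lam k = row_of lam k' -> col_of lam k = col_of lam k' -> k = k'.
Proof.
rewrite /col_of => E; rewrite E => C.
have h1 := row_start_row_of k; have h2 := row_start_row_of k'; rewrite E in h1.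
by have := congr1 (addn^~ (row_start (row_of lam k'))) C; rewrite /= !subnK.
Qed.

Lemma cell_left k j : k < sumn lam -> j < col_of lam k ->
  let k' := row_start (row_of lam k) + j in
  [/\ k' < k, row_of lam k' = row_of lam k & col_of lam k' = j].
Proof.
move=> ks jc /=.
have ub := lt_row_start_row_of ks.
have lt : row_start (row_of lam k) + j < k by move: jc; rewrite /col_of ltn_subRL.
have R : row_of lam (row_start (row_of lam k) + j) = row_of lam k.
  by apply: row_of_eq; rewrite leq_addr /=; exact: ltn_trans lt ub.
by split => //; rewrite /col_of R addKn.
Qed.

End Shape.

Lemma card_le_inj_bounded (T : finType) (A : {set T}) (g : T -> nat) h :
  {in A &, injective g} -> (forall a, a \in A -> g a < h) -> #|A| <= h.
Proof.
move=> gi gh; rewrite cardE -(size_map g) -[h](size_iota 0).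
apply: uniq_leq_size.
  by rewrite map_inj_in_uniq ?enum_uniq // => x y; rewrite !mem_enum; exact: gi.
by move=> j /mapP[a]; rewrite mem_enum => aA ->; rewrite mem_iota /=; exact: gh.
Qed.

Lemma card_ge_onto (T : finType) (A : {set T}) (g : T -> nat) h :
  (forall j, j < h -> exists2 a, a \in A & g a = j) -> h <= #|A|.
Proof.
move=> H; rewrite cardE -(size_map g) -[h](size_iota 0).
apply: uniq_leq_size; first exact: iota_uniq.
by move=> j; rewrite mem_iota /= => /H[a aA <-]; apply: map_f; rewrite mem_enum.
Qed.

Lemma card_preim_perm (T : finType) (p : {perm T}) (P : pred T) :
  #|[set k | P (p k)]| = #|[set k | P k]|.
Proof.
rewrite -(card_imset _ (@perm_inj _ p)).
suff -> : p @: [set k | P (p k)] = [set k | P k] by [].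
apply/setP => k; rewrite inE; apply/imsetP/idP => [[x]|Pk].
  by rewrite inE => Hx ->.
by exists ((p^-1)%g k); rewrite ?inE permKV.
Qed.

Lemma sum_card_fibres (T : finType) (g : T -> nat) N (Q : pred T) :
  (forall k, g k < N) ->
  \sum_(i < N) #|[set k | (g k == i) && Q k]| = #|[set k | Q k]|.
Proof.
move=> gN.
have cardE (P : pred T) : #|[set k | P k]| = \sum_k (P k : nat).
  by rewrite -sum1_card big_mkcond; apply: eq_bigr => k _; rewrite inE.
rewrite cardE (eq_bigr (fun i : 'I_N => \sum_k ((g k == i) && Q k : nat))); last first.
  by move=> i _; rewrite cardE.
rewrite exchange_big /=; apply: eq_bigr => k _.
rewrite (bigD1 (Ordinal (gN k))) //= big1 ?addn0 ?eqxx // => i ik.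
by case: eqP => //= Hg; case/eqP: ik; apply: val_inj; rewrite /= Hg.
Qed.

Lemma leq_sum_eq N (a b : nat -> nat) :
  (forall i, i < N -> a i <= b i) ->
  \sum_(i < N) a i = \sum_(i < N) b i -> forall i, i < N -> a i = b i.
Proof.
move=> le E i iN; apply/eqP; rewrite eqn_leq le //= leqNgt; apply/negP => lt.
suff : \sum_(j < N) a j < \sum_(j < N) b j by rewrite E ltnn.
rewrite (bigD1 (Ordinal iN)) //= [X in _ < X](bigD1 (Ordinal iN)) //= -addSn.
by apply: leq_add => //; apply: leq_sum => j _; apply: le.
Qed.

Section ColumnRowTransversal.
Variables (r : nat) (lam : seq nat).
Hypothesis lam_sum : sumn lam = r.
Local Notation row k := (row_of lam (nat_of_ord k)).
Local Notation col k := (col_of lam (nat_of_ord k)).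

Lemma cell_inj_ord (k k' : 'I_r) : row k = row k' -> col k = col k' -> k = k'.
Proof. by move=> R C; apply: val_inj; apply: cell_inj R C. Qed.

Variable p : {perm 'I_r}.
Hypothesis p_col_row_inj :
  forall k k' : 'I_r, col k = col k' -> row (p k) = row (p k') -> k = k'.

Definition moved_cells h i := [set k : 'I_r | (row (p k) == i) && (col k < h)].
Definition row_cells h i := [set k : 'I_r | (row k == i) && (col k < h)].

(* [row_cells h i] has [min h (length of row i)] elements, and [moved_cells h i]
   is bounded by both: it meets each column at most once, and [p] is injective. *)
Lemma card_moved_cells_le h i : #|moved_cells h i| <= #|row_cells h i|.
Proof.
have le_h : #|moved_cells h i| <= h.
  apply: (@card_le_inj_bounded _ _ (fun k : 'I_r => col k)).
    move=> a b; rewrite !inE => /andP[/eqP Ha _] /andP[/eqP Hb _] E.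
    by apply: p_col_row_inj => //; rewrite Ha Hb.
  by move=> a; rewrite inE => /andP[_].
have le_row : #|moved_cells h i| <= #|[set k : 'I_r | row k == i]|.
  rewrite -(card_preim_perm p (fun k : 'I_r => row k == i)).
  by apply: subset_leq_card; apply/subsetP => k; rewrite !inE => /andP[].
case: (boolP [forall k : 'I_r, (row k == i) ==> (col k < h)]) => [/forallP Hall|].
  suff -> : row_cells h i = [set k : 'I_r | row k == i] by [].
  apply/setP => k; rewrite !inE; case: eqP => //= E.
  by have := Hall k; rewrite E eqxx.
rewrite negb_forall => /existsP[b]; rewrite negb_imply -leqNgt => /andP[/eqP Rb hb].
apply: leq_trans le_h _; apply: (@card_ge_onto _ _ (fun k : 'I_r => col k)) => j jh.
have bs : b < sumn lam by rewrite lam_sum.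
have [lt R C] := cell_left bs (leq_trans jh hb).
by exists (Ordinal (ltn_trans lt (ltn_ord b))); rewrite ?inE /= ?R ?C ?Rb ?eqxx.
Qed.

(* Both families partition the cells of the first [h] columns. *)
Lemma card_moved_cells h i : i < (size lam).+1 -> #|moved_cells h i| = #|row_cells h i|.
Proof.
have row_lt k : row_of lam k < (size lam).+1 by rewrite ltnS row_of_le_size.
apply: (@leq_sum_eq _ (fun i => #|moved_cells h i|) (fun i => #|row_cells h i|)).
  by move=> j _; apply: card_moved_cells_le.
rewrite (@sum_card_fibres _ (fun k : 'I_r => row (p k))) //.
by rewrite (@sum_card_fibres _ (fun k : 'I_r => row k)).
Qed.

(* The row of [k] has one more cell among the first [col k + 1] columns than
   among the first [col k], so some cell of column [col k] is moved into it. *)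
Lemma column_row_transversal (k : 'I_r) :
  exists k' : 'I_r, col k' = col k /\ row (p k') = row k.
Proof.
set c := col k; set i := row k.
have iN : i < (size lam).+1 by rewrite ltnS row_of_le_size.
have : row_cells c i \proper row_cells c.+1 i.
  rewrite properE; apply/andP; split.
    by apply/subsetP => x; rewrite !inE => /andP[-> H]; rewrite ltnS ltnW.
  by apply/subsetPn; exists k; rewrite !inE ?eqxx ?ltnSn ?ltnn ?andbF.
move/proper_card; rewrite -!card_moved_cells // => lt.
case: (boolP [exists k', (k' \in moved_cells c.+1 i) && (k' \notin moved_cells c i)]).
  move/existsP=> [k' /andP[]]; rewrite !inE => /andP[/eqP R1 C1].
  rewrite R1 eqxx /= -leqNgt => C2.
  by exists k'; split => //; apply/eqP; rewrite eqn_leq C2 -ltnS C1.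
rewrite negb_exists => /forallP H.
suff /subset_leq_card : moved_cells c.+1 i \subset moved_cells c i by rewrite leqNgt lt.
by apply/subsetP => x xT; have := H x; rewrite xT /= negbK.
Qed.

End ColumnRowTransversal.

Local Open Scope ring_scope.
Local Notation sgn p := ((-1) ^+ odd_perm p : int).

Lemma ffun_eqNr (T : finType) (R : numDomainType) (x : {ffun T -> R}) :
  (- x == x) = (x == 0).
Proof.
apply/eqP/eqP => [E|->]; last by rewrite oppr0.
apply/ffunP => i; apply/eqP; rewrite ffunE -Num.Theory.eqNr.
by have := congr1 (fun y : {ffun T -> R} => y i) E; rewrite /= ffunE => ->.
Qed.

Section PermutationModule.
Variables (r : nat) (lam : seq nat).

Definition tabv (u : 'S_r) : Mperm r := delta (tabloid lam u).

Lemma tabloidM (u p : 'S_r) i : tabloid lam (u * p)%g i = tabloid lam u ((p^-1)%g i).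
Proof. by rewrite !ffunE invMg permM. Qed.

Lemma tabloid_eqMr (v w s : 'S_r) :
  (tabloid lam (v * s)%g == tabloid lam (w * s)%g) = (tabloid lam v == tabloid lam w).
Proof.
apply/eqP/eqP => [E|E]; apply/ffunP => i; rewrite ?tabloidM ?E //.
by have := congr1 (fun f : rowfun r => f (s i)) E; rewrite /= !tabloidM permK.
Qed.

Lemma mperm_act_tabv (s u : 'S_r) : mperm_act s (tabv u) = tabv (u * s)%g.
Proof.
apply/ffunP => psi; rewrite !ffunE; congr (Posz (nat_of_bool _)).
apply/eqP/eqP => [E|->]; apply/ffunP => i; last by rewrite ffunE tabloidM permK.
have := congr1 (fun f : rowfun r => f ((s^-1)%g i)) E; rewrite /= ffunE permKV => ->.
by rewrite tabloidM.
Qed.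

Lemma mperm_act0 (g : 'S_r) : mperm_act g (0 : Mperm r) = 0.
Proof. by apply/ffunP => psi; rewrite !ffunE. Qed.

Lemma mperm_actD (g : 'S_r) (x y : Mperm r) :
  mperm_act g (x + y) = mperm_act g x + mperm_act g y.
Proof. by apply/ffunP => psi; rewrite !ffunE. Qed.

Lemma mperm_actMz (g : 'S_r) (x : Mperm r) z : mperm_act g (x *~ z) = mperm_act g x *~ z.
Proof. by apply/ffunP => psi; rewrite ffunMzE !ffunE ffunMzE. Qed.

Lemma mperm_act_sum (g : 'S_r) (I : Type) (s : seq I) (P : pred I) (F : I -> Mperm r) :
  mperm_act g (\sum_(i <- s | P i) F i) = \sum_(i <- s | P i) mperm_act g (F i).
Proof. exact: (big_morph _ (mperm_actD g) (mperm_act0 g)). Qed.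

Lemma colgroupM (t p q : 'S_r) :
  colgroup lam t p -> colgroup lam t q -> colgroup lam t (p * q)%g.
Proof.
move=> /forallP Hp /forallP Hq; apply/forallP => i.
by rewrite permM (eqP (Hq _)) (eqP (Hp _)).
Qed.

Lemma colgroupV (t p : 'S_r) : colgroup lam t p -> colgroup lam t (p^-1)%g.
Proof.
move=> /forallP Hp; apply/forallP => i.
by have := Hp ((p^-1)%g i); rewrite permKV eq_sym.
Qed.

Lemma colgroupMl (t p q : 'S_r) :
  colgroup lam t p -> colgroup lam t (p * q)%g = colgroup lam t q.
Proof.
move=> Cp; apply/idP/idP => [|]; last exact: colgroupM.
by move/(colgroupM (colgroupV Cp)); rewrite mulKg.
Qed.

Lemma colgroupMr (t p q : 'S_r) :
  colgroup lam t q -> colgroup lam t (p * q)%g = colgroup lam t p.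
Proof.
move=> Cq; apply/idP/idP => [|]; last by move/colgroupM; apply.
by move/colgroupM/(_ (colgroupV Cq)); rewrite mulgK.
Qed.

Lemma colgroup_tperm (t : 'S_r) a b :
  col_of lam ((t^-1)%g a) = col_of lam ((t^-1)%g b) -> colgroup lam t (tperm a b).
Proof. by move=> E; apply/forallP => i; case: tpermP => [->|->|]; rewrite ?E. Qed.

Lemma colgroupJ (t s p : 'S_r) : colgroup lam (t * s)%g (p ^ s)%g = colgroup lam t p.
Proof.
have E i : ((t * s)^-1)%g ((p ^ s)%g i) = (t^-1)%g (p ((s^-1)%g i)).
  by rewrite conjgE invMg !permM permK.
apply/forallP/forallP => H i; last by rewrite E invMg permM.
by have := H (s i); rewrite E permK invMg permM permK.
Qed.

Lemma mperm_act_polytabloid (s t : 'S_r) :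
  mperm_act s (polytabloid lam t) = polytabloid lam (t * s)%g.
Proof.
rewrite /polytabloid mperm_act_sum [RHS](reindex_inj (conjg_inj s)) /=.
apply: eq_big => p; first by rewrite colgroupJ.
move=> _; rewrite mperm_actMz odd_permJ.
have -> : (t * s * p ^ s)%g = (t * p * s)%g by rewrite conjgE !mulgA mulgK.
by rewrite -/(tabv _) mperm_act_tabv.
Qed.

Lemma polytabloidE t phi : polytabloid lam t phi =
  \sum_(p : 'S_r | colgroup lam t p) ((phi == tabloid lam (t * p)%g) : int) * sgn p.
Proof.
rewrite /polytabloid sum_ffunE; apply: eq_bigr => p _.
by rewrite ffunMzE ffunE mulrzz.
Qed.

End PermutationModule.

Section SpechtModule.
Variables (r : nat) (lam : seq nat).
Local Notation specht := (@specht lam r).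

Lemma specht0 : specht 0.
Proof. by exists 0; rewrite big1 // => t _; rewrite ffunE mulr0z. Qed.

Lemma spechtD x y : specht x -> specht y -> specht (x + y).
Proof.
move=> [c1 ->] [c2 ->]; exists (c1 + c2); rewrite -big_split /=.
by apply: eq_bigr => t _; rewrite ffunE mulrzDr.
Qed.

Lemma spechtMz x z : specht x -> specht (x *~ z).
Proof.
move=> [c ->]; exists [ffun t => c t * z]; rewrite mulrz_suml.
by apply: eq_bigr => t _; rewrite ffunE mulrzA.
Qed.

Lemma spechtN x : specht x -> specht (- x).
Proof. by rewrite -mulrN1z; apply: spechtMz. Qed.

Lemma specht_sum (I : Type) (s : seq I) (P : pred I) (F : I -> Mperm r) :
  (forall i, P i -> specht (F i)) -> specht (\sum_(i <- s | P i) F i).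
Proof. by move=> H; apply: big_ind => //; [exact: specht0 | exact: spechtD]. Qed.

Lemma specht_polytabloid t : specht (polytabloid lam t).
Proof.
exists [ffun t' => ((t' == t) : int)].
rewrite (bigD1 t) //= big1 ?addr0; first by rewrite ffunE eqxx.
by move=> t' /negbTE H; rewrite ffunE H mulr0z.
Qed.

Lemma specht_mperm_act g x : specht x -> specht (mperm_act g x).
Proof.
move=> [c ->]; rewrite mperm_act_sum; apply: specht_sum => t _.
by rewrite mperm_actMz mperm_act_polytabloid; apply/spechtMz/specht_polytabloid.
Qed.

End SpechtModule.

Section ColumnSum.
Variables (r : nat) (lam : seq nat).
Hypotheses (lam_sum : sumn lam = r) (size_lam : (size lam <= r)%N).
Local Notation tabv := (@tabv r lam).

Definition colsum (t : 'S_r) (x : Mperm r) : Mperm r :=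
  \sum_(p : 'S_r | colgroup lam t p) mperm_act p x *~ sgn p.

Definition dotm (x y : Mperm r) : int := \sum_psi x psi * y psi.

Lemma dotmC x y : dotm x y = dotm y x.
Proof. by apply: eq_bigr => psi _; rewrite mulrC. Qed.

Lemma dotm0 y : dotm 0 y = 0.
Proof. by rewrite /dotm big1 // => p _; rewrite ffunE mul0r. Qed.

Lemma dotmDl x y e : dotm (x + y) e = dotm x e + dotm y e.
Proof. by rewrite /dotm -big_split; apply: eq_bigr => p _; rewrite ffunE mulrDl. Qed.

Lemma dotmMzl x z e : dotm (x *~ z) e = dotm x e * z.
Proof.
by rewrite /dotm -mulrzz mulrz_suml; apply: eq_bigr => p _; rewrite ffunMzE mulrzAl.
Qed.

Lemma dotm_tabv u y : dotm (tabv u) y = y (tabloid lam u).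
Proof.
rewrite /dotm (bigD1 (tabloid lam u)) //= big1 ?addr0; first by rewrite ffunE eqxx mul1r.
by move=> psi /negbTE H; rewrite ffunE H mul0r.
Qed.

Lemma dotm_eq0 x : (dotm x x == 0) = (x == 0).
Proof.
apply/eqP/eqP => [|->]; last exact: dotm0.
rewrite /dotm => /eqP; rewrite Num.Theory.psumr_eq0 => [/allP x0|psi _]; last first.
  by rewrite -expr2 Num.Theory.sqr_ge0.
apply/ffunP => psi; have := x0 psi (mem_index_enum _).
by rewrite /= mulf_eq0 orbb ffunE => /eqP.
Qed.

Lemma colsum0 t : colsum t 0 = 0.
Proof. by rewrite /colsum big1 // => p _; rewrite mperm_act0 mul0rz. Qed.

Lemma colsumD t x y : colsum t (x + y) = colsum t x + colsum t y.
Proof.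
by rewrite /colsum -big_split; apply: eq_bigr => p _; rewrite mperm_actD mulrzDl.
Qed.

Lemma colsumMz t x z : colsum t (x *~ z) = colsum t x *~ z.
Proof.
by rewrite /colsum mulrz_suml; apply: eq_bigr => p _; rewrite mperm_actMz mulrzAC.
Qed.

Lemma colsum_tabv t u :
  colsum t (tabv u) = \sum_(p : 'S_r | colgroup lam t p) tabv (u * p)%g *~ sgn p.
Proof. by apply: eq_bigr => p _; rewrite mperm_act_tabv. Qed.

Lemma tabloid_colgroup_inj (t p q : 'S_r) : colgroup lam t p -> colgroup lam t q ->
  tabloid lam (t * p)%g = tabloid lam (t * q)%g -> p = q.
Proof.
have row_lt (k : 'I_r) : (row_of lam k < r.+1)%N.
  by rewrite ltnS (leq_trans (row_of_le_size _ _) size_lam).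
move=> Cp Cq E; apply: invg_inj; apply/permP => i.
have := congr1 (fun f : rowfun r => f i) E; rewrite !ffunE !invMg !permM => /(congr1 val).
rewrite /= !inordK // => R.
apply: (@perm_inj _ (t^-1)%g); apply: (cell_inj_ord R).
have /forallP Hp := colgroupV Cp; have /forallP Hq := colgroupV Cq.
by rewrite (eqP (Hp i)) (eqP (Hq i)).
Qed.

(* The column permutation is assembled cell by
   cell from [column_row_transversal], applied to [t * u^-1], which sends each
   cell to the cell of [u] holding the same entry as it does in [t]. *)
Lemma tabloid_colgroup_exists (t u : 'S_r) :
  (forall a b, col_of lam ((t^-1)%g a) = col_of lam ((t^-1)%g b) ->
     row_of lam ((u^-1)%g a) = row_of lam ((u^-1)%g b) -> a = b) ->
  exists2 q, colgroup lam t q & tabloid lam (t * q)%g = tabloid lam u.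
Proof.
move=> colrow_inj; pose pi := (t * u^-1)%g.
have pi_inj (k k' : 'I_r) : col_of lam k = col_of lam k' ->
    row_of lam (pi k) = row_of lam (pi k') -> k = k'.
  move=> C R; apply: (@perm_inj _ t); apply: colrow_inj; first by rewrite !permK.
  by rewrite /pi !permM in R.
pose g (k : 'I_r) := odflt k [pick k' : 'I_r |
  (col_of lam k' == col_of lam k) && (row_of lam (pi k') == row_of lam k)].
have gP k : col_of lam (g k) = col_of lam k /\ row_of lam (pi (g k)) = row_of lam k.
  rewrite /g; case: pickP => [k' /andP[/eqP C /eqP R] //|none].
  have [k' [C R]] := column_row_transversal lam_sum pi_inj k.
  by have := none k'; rewrite C R !eqxx.
have g_inj : injective g.
  move=> k1 k2 E; have [C1 R1] := gP k1; have [C2 R2] := gP k2.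
  by apply: (cell_inj_ord (lam := lam)); rewrite -?R1 -?R2 -?C1 -?C2 E.
pose gam := perm g_inj.
exists (t^-1 * gam * t)%g.
  by apply/forallP => i; rewrite !permM permK /gam permE; have [-> _] := gP ((t^-1)%g i).
apply/ffunP => i; rewrite !ffunE; congr inord.
rewrite !mulgA mulgV mul1g invMg permM.
set k := (gam^-1)%g ((t^-1)%g i).
have [_ <-] := gP k.
have gk : g k = (t^-1)%g i by rewrite -[g k]permE permKV.
by rewrite /pi permM gk permKV.
Qed.

(* A transposition [tau] of two entries lying in one column of [t] and one row
   of [u] fixes [{u}] and flips signs, so both sides vanish. *)
Lemma colsum_tabv_tperm (t u : 'S_r) a b : a != b ->
  col_of lam ((t^-1)%g a) = col_of lam ((t^-1)%g b) ->
  row_of lam ((u^-1)%g a) = row_of lam ((u^-1)%g b) ->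
  colsum t (tabv u) = 0 /\ polytabloid lam t (tabloid lam u) = 0.
Proof.
move=> ab Cab Rab; pose tau := tperm a b.
have Ct : colgroup lam t tau by apply: colgroup_tperm.
have Eu : tabloid lam (u * tau)%g = tabloid lam u.
  apply/ffunP => i; rewrite tabloidM tpermV /tau.
  by case: tpermP => [->|->|//]; rewrite !ffunE ?Rab -?Rab.
have sgnl (p : 'S_r) : sgn (tau * p)%g = - sgn p.
  by rewrite odd_mul_tperm ab signr_addb expr1 mulN1r.
have sgnr (p : 'S_r) : sgn (p * tau)%g = - sgn p.
  by rewrite odd_permM odd_tperm ab signr_addb expr1 mulrN1.
split.
  apply/eqP; rewrite -ffun_eqNr colsum_tabv -sumrN (reindex_inj (mulgI tau)) /=.
  apply/eqP/eq_big => p; first exact: colgroupMl.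
  move=> _; rewrite sgnl mulrNz opprK mulgA; congr (_ *~ _).
  by rewrite /tabv; congr delta; apply/eqP; rewrite tabloid_eqMr Eu.
apply/eqP; rewrite -Num.Theory.eqNr polytabloidE -sumrN (reindex_inj (mulIg tau)) /=.
apply/eqP/eq_big => p; first exact: colgroupMr.
move=> _; rewrite sgnr mulrN opprK; congr (_ * _).
by rewrite mulgA -{1}Eu tabloid_eqMr.
Qed.

Lemma colsum_tabv_colgroup (t u q : 'S_r) : colgroup lam t q ->
  tabloid lam (t * q)%g = tabloid lam u ->
  colsum t (tabv u) = polytabloid lam t *~ sgn q /\
  polytabloid lam t (tabloid lam u) = sgn q.
Proof.
move=> Cq Eq; split.
  rewrite colsum_tabv (reindex_inj (mulgI (q^-1)%g)) /= mulrz_suml.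
  apply: eq_big => p; first by rewrite colgroupMl // colgroupV.
  move=> _; rewrite odd_permM odd_permV signr_addb mulrzA_C; congr (_ *~ _).
  rewrite /tabv mulgA; congr delta; apply/eqP.
  by rewrite tabloid_eqMr -[t]mulg1 -(mulgV q) mulgA tabloid_eqMr Eq.
rewrite polytabloidE (bigD1 q) //= big1 ?addr0 ?Eq ?eqxx ?mul1r // => p /andP[Cp pq].
case: eqP => [E|_]; last by rewrite mul0r.
by case/eqP: pq; apply: (tabloid_colgroup_inj Cp Cq); rewrite -E Eq.
Qed.

Lemma colsum_tabv_dotm t u :
  colsum t (tabv u) = polytabloid lam t *~ dotm (tabv u) (polytabloid lam t).
Proof.
rewrite dotm_tabv.
case: (boolP [exists a, exists b, [&& a != b,
    col_of lam ((t^-1)%g a) == col_of lam ((t^-1)%g b) &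
    row_of lam ((u^-1)%g a) == row_of lam ((u^-1)%g b)]]).
  move=> /existsP[a /existsP[b /and3P[ab /eqP Cab /eqP Rab]]].
  by have [-> ->] := colsum_tabv_tperm ab Cab Rab; rewrite mulr0z.
rewrite negb_exists => /forallP no_pair.
have [|q Cq Eq] := @tabloid_colgroup_exists t u.
  move=> a b C R; apply/eqP; apply: contraT => ab.
  by have /existsPn/(_ b) := no_pair a; rewrite ab C R !eqxx.
by have [-> ->] := colsum_tabv_colgroup Cq Eq.
Qed.

Lemma colsum_specht t x : specht lam x ->
  colsum t x = polytabloid lam t *~ dotm x (polytabloid lam t).
Proof.
set e := polytabloid lam t; pose Q x := colsum t x = e *~ dotm x e.
have Q0 : Q 0 by rewrite /Q colsum0 dotm0 mulr0z.
have QD x1 y1 : Q x1 -> Q y1 -> Q (x1 + y1).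
  by rewrite /Q colsumD dotmDl mulrzDr => -> ->.
have QMz x1 z : Q x1 -> Q (x1 *~ z) by rewrite /Q colsumMz dotmMzl mulrzA => ->.
have Q_sum (I : Type) (s : seq I) (P : pred I) F c :
    (forall i, Q (F i)) -> Q (\sum_(i <- s | P i) F i *~ c i).
  by move=> QF; apply: big_ind => // i _; apply: QMz.
by move=> [c ->]; apply: (Q_sum) => t'; apply: (Q_sum) => p; apply: colsum_tabv_dotm.
Qed.

Lemma specht_dotm_polytabloid z : specht lam z -> z != 0 ->
  exists t, dotm z (polytabloid lam t) != 0.
Proof.
move=> [c Ez]; rewrite -dotm_eq0 => nz; apply/existsP; move: nz.
apply: contraNT => /existsPn no_t.
rewrite {2}Ez dotmC (big_morph (dotm^~ z) (fun x y => dotmDl x y z) (dotm0 z)).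
rewrite big1 // => t _.
by rewrite dotmMzl dotmC (eqP (negPn (no_t t))) mul0r.
Qed.

End ColumnSum.

Lemma sum_Mz_uniq (M : zmodType) (I : eqType) (b : I -> M) (s : seq I) (c : I -> int) :
  exists s' (c' : I -> int),
    uniq s' /\ \sum_(i <- s) b i *~ c i = \sum_(i <- s') b i *~ c' i.
Proof.
elim: s => [|a s [s' [c' [us' E]]]]; first by exists [::], c.
rewrite big_cons E; case: (boolP (a \in s')) => as'.
  exists s', (fun i => if i == a then c' a + c a else c' i); split => //.
  rewrite (bigD1_seq a) // [in RHS](bigD1_seq a) //= eqxx mulrzDr.
  rewrite addrA [b a *~ c a + _]addrC; congr (_ + _).
  by apply: eq_bigr => i /negbTE ->.
exists (a :: s'), (fun i => if i == a then c a else c' i); split; first by rewrite /= as'.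
rewrite big_cons eqxx; congr (_ + _); apply: eq_big_seq => i is'.
by case: eqP => // E'; rewrite -E' is' in as'.
Qed.

Lemma free_Zmodule_torsionfree (M : zmodType) : free_Zmodule M ->
  forall (m : M) (d : int), d != 0 -> m *~ d = 0 -> m = 0.
Proof.
move=> [I [b [b_free b_span]]] m d d0.
have [s [c ->]] := b_span m; have [s' [c' [us' ->]]] := sum_Mz_uniq b s c.
rewrite mulrz_suml => md.
have c'0 i : i \in s' -> c' i = 0.
  move=> is'; apply: (mulIf d0); rewrite mul0r.
  apply: (b_free s' (fun j => c' j * d)) => //.
  by rewrite -[RHS]md; apply: eq_bigr => j _; rewrite mulrzA.
by rewrite big1_seq // => i /andP[_ /c'0 ->]; rewrite mulr0z.
Qed.

Section SpechtHom.
Variables (r : nat) (lam : seq nat) (M : zmodType).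
Variables (rho : 'S_r -> M -> M) (f : Mperm r -> M).
Hypothesis rhoD : forall g x y, rho g (x + y) = rho g x + rho g y.
Hypothesis fD : forall x y, specht lam x -> specht lam y -> f (x + y) = f x + f y.
Hypothesis fJ : forall g x, specht lam x -> f (mperm_act g x) = rho g (f x).

Lemma rho0 g : rho g 0 = 0.
Proof. by apply: (addrI (rho g 0)); rewrite -rhoD !addr0. Qed.

Lemma hom0 : f 0 = 0.
Proof. by apply: (addrI (f 0)); rewrite -fD ?addr0 //; apply: specht0. Qed.

Lemma homN x : specht lam x -> f (- x) = - f x.
Proof.
move=> Sx; apply: (addrI (f x)); rewrite -fD ?subrr ?hom0 //; exact: spechtN.
Qed.

Lemma homMz x z : specht lam x -> f (x *~ z) = f x *~ z.
Proof.
have homMn n : specht lam x -> f (x *+ n) = f x *+ n.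
  move=> Sx; elim: n => [|n IH]; first by rewrite !mulr0n hom0.
  by rewrite !mulrS fD ?IH // pmulrn; apply: spechtMz.
move=> Sx; case: z => n; first by rewrite -!pmulrn homMn.
by rewrite NegzE -!nmulrn homN ?homMn // pmulrn; apply: spechtMz.
Qed.

Lemma hom_sum (I : Type) (s : seq I) (P : pred I) (F : I -> Mperm r) :
  (forall i, specht lam (F i)) ->
  f (\sum_(i <- s | P i) F i) = \sum_(i <- s | P i) f (F i).
Proof.
move=> SF; suff [] : specht lam (\sum_(i <- s | P i) F i) /\
    f (\sum_(i <- s | P i) F i) = \sum_(i <- s | P i) f (F i) by [].
apply: (big_ind2 (fun a b => specht lam a /\ f a = b))
  => [|a1 b1 a2 b2 [S1 <-] [S2 <-]|i _].
- by split; [exact: specht0 | exact: hom0].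
- by split; [exact: spechtD | exact: fD].
- by split.
Qed.

Lemma hom_colsum_eq0 t x : specht lam x -> f x = 0 -> f (colsum lam t x) = 0.
Proof.
move=> Sx fx0; rewrite hom_sum => [|p]; last exact/spechtMz/specht_mperm_act.
by apply: big1 => p _; rewrite homMz ?fJ ?fx0 ?rho0 ?mul0rz //; apply: specht_mperm_act.
Qed.

(* [e_t] generates [S^lam]: every [e_t'] is [e_t . (t^-1 t')]. *)
Lemma hom_eq0_polytabloid t : f (polytabloid lam t) = 0 ->
  forall x, specht lam x -> f x = 0.
Proof.
move=> fe0 x [c ->]; rewrite hom_sum => [|t']; last exact/spechtMz/specht_polytabloid.
apply: big1 => t' _; rewrite homMz; last exact: specht_polytabloid.
rewrite -(mulKVg t t') -mperm_act_polytabloid fJ; last exact: specht_polytabloid.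
by rewrite fe0 rho0 mul0rz.
Qed.

Hypotheses (lam_sum : sumn lam = r) (size_lam : (size lam <= r)%N).
Hypothesis M_torsionfree : forall (m : M) (d : int), d != 0 -> m *~ d = 0 -> m = 0.

Lemma specht_hom_ker_eq0 z : specht lam z -> f z = 0 -> z != 0 ->
  forall x, specht lam x -> f x = 0.
Proof.
move=> Sz fz0 nz; have [t dt] := specht_dotm_polytabloid Sz nz.
apply: (hom_eq0_polytabloid (t := t)); apply: M_torsionfree dt _.
rewrite -homMz; last exact: specht_polytabloid.
by rewrite -colsum_specht // hom_colsum_eq0.
Qed.

Lemma specht_hom_inj : (exists x, specht lam x /\ f x <> 0) ->
  forall x y, specht lam x -> specht lam y -> f x = f y -> x = y.
Proof.
move=> [w [Sw fw0]] x y Sx Sy fxy; apply/eqP; rewrite -subr_eq0; apply: contraT => nxy.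
have Sxy : specht lam (x - y) by apply/spechtD/spechtN.
have fxy0 : f (x - y) = 0 by rewrite fD ?homN ?fxy ?subrr //; exact: spechtN.
by case: (fw0 (specht_hom_ker_eq0 Sxy fxy0 nxy Sw)).
Qed.

End SpechtHom.

Theorem lemma3p3 (r : nat) (lam : seq nat) (M : zmodType)
    (rho : 'S_r -> M -> M) (f : Mperm r -> M) :
  is_partition lam r ->
  is_ZSr_action rho ->
  free_Zmodule M ->
  (forall x y, specht lam x -> specht lam y -> f (x + y) = f x + f y) ->
  (forall (g : 'S_r) x, specht lam x -> f (mperm_act g x) = rho g (f x)) ->
  (exists x, specht lam x /\ f x <> 0) ->
  forall x y, specht lam x -> specht lam y -> f x = f y -> x = y.
Proof.
move=> /and3P[_ lam_pos /eqP lam_sum] [rhoD _ _] /free_Zmodule_torsionfree M_tf fD fJ.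
have size_lam : (size lam <= r)%N by rewrite -lam_sum size_le_sumn.
exact: specht_hom_inj rhoD fD fJ lam_sum size_lam M_tf.
Qed.
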